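(* Let $\mathcal{S}$ be a circle with one of the projective structures of the context and $\xi\in\mathrm{Vect}(\mathcal{S})$ with flow $\varphi_s$. The infinitesimal Schwarzian $\mathbf{s}(\xi)=\frac{d}{ds}\big|_{s=0}\mathbf{S}(\varphi_s)$ satisfies $\mathbf{s}(\xi)=s_1(\xi)$, where $$\mathbf{s}(\xi)=\lambda\,d\Big(\frac{d\,\mathrm{Div}\,\xi}{\lambda}\Big)\qquad\text{and}\qquad s_1(\xi)=\tfrac32\big(L_\xi\mathrm{g}_1\big)\big|_\Delta .$$
   Context: $\mathcal{S}$ is either (a) $\mathbb{R}/2\pi\mathbb{Z}$ with developing map $\Phi:\mathbb{R}\to\mathbb{R}P^1=\mathbb{R}\cup\{\infty\}$, $\Phi(\theta)=2\tan(\theta/2)$; or (b) $\mathbb{R}P^1=\mathbb{R}/\pi\mathbb{Z}$ with $\Phi(\theta)=\tan\theta$. $\lambda=\Phi^*dt$ ($t$ the affine coordinate of $\mathbb{R}P^1$), $\mathrm{Div}\,\xi=(L_\xi\lambda)/\lambda$. For $\varphi\in\mathrm{Diff}_+(\mathcal{S})$, $\tilde\varphi$ is the diffeomorphism of $\mathbb{R}P^1$ with $\tilde\varphi\circ\Phi=\Phi\circ\varphi$ and $\mathbf{S}(\varphi)=\Phi^*S(\tilde\varphi)$, $S(\tilde\varphi)=\big(\tilde\varphi'''/\tilde\varphi'-\tfrac32(\tilde\varphi''/\tilde\varphi')^2\big)dt^2$. $\mathrm{g}_1$ is the Lorentz metric on $\mathcal{S}\times\mathcal{S}-\Delta$ obtained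 by descending $(\Phi\times\Phi)^*\big(4\,dt_1dt_2/(t_1-t_2)^2\big)$; $L_\xi$ is the Lie derivative along $\xi\oplus\xi$; $L_\xi\mathrm{g}_1$ extends smoothly to the diagonal $\Delta$ and $|_\Delta$ is pullback by $\theta\mapsto(\theta,\theta)$. *)

(* Stdlib reals + Coquelicot.  Everything is expressed in the
   coordinate theta on the universal cover R of the circle S. *)
From Stdlib Require Import Reals List.
From Coquelicot Require Import Coquelicot.
Open Scope R_scope.

(* The two projective circles of the context:
   (a) R/2piZ with Phi(theta) = 2 tan(theta/2);  (b) RP^1 = R/piZ with Phi = tan. *)
Inductive pcircle := circle_2pi | circle_RP1.

Definition period (c : pcircle) : R :=
  match c with circle_2pi => 2 * PI | circle_RP1 => PI end.

(* developing map (affine coordinate t of RP^1; its value at the poles is irrelevant) *)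
Definition Phi (c : pcircle) (th : R) : R :=
  match c with circle_2pi => 2 * tan (th / 2) | circle_RP1 => tan th end.

(* a (principal-branch) inverse of Phi: Phi (Phi_inv c t) = t *)
Definition Phi_inv (c : pcircle) (t : R) : R :=
  match c with circle_2pi => 2 * atan (t / 2) | circle_RP1 => atan t end.

Definition Phi_finite (c : pcircle) (th : R) : Prop :=
  match c with circle_2pi => cos (th / 2) <> 0 | circle_RP1 => cos th <> 0 end.

(* lambda = Phi^* dt = lam c theta d theta *)
Definition lam (c : pcircle) (th : R) : R := Derive (Phi c) th.

Definition smooth (f : R -> R) : Prop := forall n x, ex_derive_n f n x.

Definition periodic (P : R) (f : R -> R) : Prop := forall x, f (x + P) = f x.

(* xi = f(theta) d/dtheta is a (smooth) vector field on S *)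
Definition vector_field (c : pcircle) (f : R -> R) : Prop :=
  smooth f /\ periodic (period c) f.

Definition pd1 (g : R -> R -> R) : R -> R -> R :=
  fun s t => Derive (fun s' => g s' t) s.
Definition pd2 (g : R -> R -> R) : R -> R -> R :=
  fun s t => Derive (fun t' => g s t') t.
Fixpoint pdw (w : list bool) (g : R -> R -> R) : R -> R -> R :=
  match w with
  | nil => g
  | cons b w' => (if b then pd1 else pd2) (pdw w' g)
  end.

Definition smooth2 (g : R -> R -> R) : Prop :=
  forall w s t,
    continuity_2d_pt (pdw w g) s t /\
    ex_derive (fun s' => pdw w g s' t) s /\
    ex_derive (fun t' => pdw w g s t') t.

(* phi s = phi_s is the flow of xi = f d/dtheta (lifted to the cover R) *)
Definition is_flow (f : R -> R) (phi : R -> R -> R) : Prop :=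
  smooth2 phi /\
  (forall th, phi 0 th = th) /\
  (forall s th, is_derive (fun s' => phi s' th) s (f (phi s th))).

(* classical Schwarzian derivative (coefficient of dt^2) *)
Definition schwarzian (g : R -> R) (t : R) : R :=
  Derive_n g 3 t / Derive g t - 3 / 2 * (Derive_n g 2 t / Derive g t) ^ 2.

(* tilde psi : the map of RP^1 with tilde psi o Phi = Phi o psi *)
Definition tilde_map (c : pcircle) (psi : R -> R) : R -> R :=
  fun t => Phi c (psi (Phi_inv c t)).

(* coefficient of  S(psi) = Phi^* S(tilde psi)  at theta (theta with Phi theta finite) *)
Definition Schw_bold (c : pcircle) (psi : R -> R) (th : R) : R :=
  schwarzian (tilde_map c psi) (Phi c th) * (lam c th) ^ 2.

(* Div xi = (L_xi lambda)/lambda ;  L_xi lambda = d(iota_xi lambda) = (f lam)' dtheta *)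
Definition Div (c : pcircle) (f : R -> R) (th : R) : R :=
  Derive (fun x => f x * lam c x) th / lam c th.

(* coefficient of  lambda d( d Div xi / lambda )  (a quadratic differential) *)
Definition s_formula (c : pcircle) (f : R -> R) (th : R) : R :=
  lam c th * Derive (fun x => Derive (Div c f) x / lam c x) th.

(* coefficient of g_1 = (Phi x Phi)^*( 4 dt1 dt2 / (t1 - t2)^2 ) w.r.t. dtheta1 dtheta2 *)
Definition g1 (c : pcircle) (a b : R) : R :=
  4 * lam c a * lam c b / (Phi c a - Phi c b) ^ 2.

(* coefficient of L_{xi (+) xi} g_1 w.r.t. dtheta1 dtheta2 *)
Definition Lie_g1 (c : pcircle) (f : R -> R) (a b : R) : R :=
  f a * Derive (fun x => g1 c x b) a + f b * Derive (fun y => g1 c a y) b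
  + g1 c a b * (Derive f a + Derive f b).

From Stdlib Require Import Reals Lra ZArith List FunctionalExtensionality ClassicalEpsilon.
From Coquelicot Require Import Coquelicot.
Open Scope R_scope.

(* Write Phi = a tan(theta/a) (a = 2 or 1) and work in the affine chart t = Phi(theta).

   Schwarzian: Phi has constant Schwarzian 2/a^2, so the cocycle identity gives
   bold-S(phi_s) = (2/a^2)(phi_s'^2 - 1) + S(phi_s), with S the Schwarzian in the coordinate
   theta.  Its s-derivative at s = 0 is f''' + (4/a^2) f'.

   Pullback: in the chart, xi = f d/dtheta becomes F(t) d/dt with F(Phi theta) = f lambda.
   Then Div xi = F' o Phi, lambda d(d Div xi / lambda) = Phi^*(F''' dt^2), and
   (F''' o Phi) lambda^2 = f''' + (4/a^2) f', which gives the first identity.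

   The metric g_1: with u = Phi(th1), w = Phi(th2),
     L_xi g_1 = 4 lambda(th1) lambda(th2) [(u - w)(F'(u) + F'(w)) - 2 (F(u) - F(w))] / (u - w)^3,
   and the error formula of the trapezoid rule turns the bracket into (u - w)^3 F'''(zeta) / 6
   with zeta between u and w.  Hence L_xi g_1 tends to (2/3) F'''(Phi th) lambda(th)^2 on the
   diagonal. *)

Lemma one_plus_sqr_pos (u : R) : 0 < 1 + u ^ 2.
Proof. pose proof (pow2_ge_0 u). lra. Qed.

Lemma locally_neq0 (g : R -> R) x : continuous g x -> g x <> 0 -> locally x (fun y => g y <> 0).
Proof. intros Hg Hx. exact (Hg _ (open_neq 0 _ Hx)). Qed.

Lemma Derive_of_is_derive (F : R -> R) y l : is_derive F y l -> Derive (fun x => F x) y = l.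
Proof. exact (is_derive_unique F y l). Qed.

Lemma Derive_is_derive_loc (F G : R -> R) y l :
  locally y (fun x => G x = F x) -> is_derive G y l -> Derive F y = l.
Proof. intros Hloc HG. apply is_derive_unique, (is_derive_ext_loc G); assumption. Qed.

Lemma is_derive_comp_mul (A B : R -> R) x dA dB :
  is_derive A (B x) dA -> is_derive B x dB -> is_derive (fun t => A (B t)) x (dA * dB).
Proof. intros HA HB. rewrite Rmult_comm. exact (is_derive_comp A B x dA dB HA HB). Qed.

Ltac Derive_eta_reduce :=
  repeat match goal with
  | |- context [Derive (fun x => ?g x)] => change (Derive (fun x => g x)) with (Derive g)
  end.

Lemma Rolle_open (g g' : R -> R) u v : u <> v ->
  (forall x, Rmin u v <= x <= Rmax u v -> is_derive g x (g' x)) -> g u = g v ->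
  exists z, Rmin u v < z < Rmax u v /\ g' z = 0.
Proof.
  intros Huv Hg Heq.
  assert (Hmvt : forall p q, p < q -> (forall x, p <= x <= q -> is_derive g x (g' x)) -> g p = g q ->
            exists z, p < z < q /\ g' z = 0).
  { intros p q Hpq Hd Hpq'. destruct (MVT_cor2 g g' p q Hpq) as [z [Hz Hzpq]].
    - intros x Hx. apply is_derive_Reals, Hd, Hx.
    - exists z. split; [exact Hzpq|]. rewrite Hpq' in Hz.
      apply (Rmult_eq_reg_r (q - p)); lra. }
  destruct (Rlt_or_le u v) as [Hlt | Hle].
  - rewrite Rmin_left, Rmax_right in * by lra. exact (Hmvt u v Hlt Hg Heq).
  - rewrite Rmin_right, Rmax_left in * by lra. apply (Hmvt v u); [lra | exact Hg | auto].
Qed.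

Lemma ball_between (t e x y z : R) : ball t e x -> ball t e y -> Rmin x y <= z <= Rmax x y -> ball t e z.
Proof.
  unfold ball; simpl; unfold AbsRing_ball, abs, minus, plus, opp; simpl.
  intros Hx Hy Hz. apply Rabs_def2 in Hx. apply Rabs_def2 in Hy.
  apply Rabs_def1; unfold Rmin, Rmax in Hz; destruct (Rle_dec x y); lra.
Qed.

Lemma filterlim_between {T} (F : (T -> Prop) -> Prop) {FF : Filter F} (u w : T -> R) (t0 : R)
  (P : T -> R -> Prop) :
  filterlim u F (locally t0) -> filterlim w F (locally t0) ->
  F (fun p => exists z, Rmin (u p) (w p) <= z <= Rmax (u p) (w p) /\ P p z) ->
  exists z : T -> R, filterlim z F (locally t0) /\ F (fun p => P p (z p)).
Proof.
  intros Hu Hw HP.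
  set (z := fun p => epsilon (inhabits t0) (fun z => Rmin (u p) (w p) <= z <= Rmax (u p) (w p) /\ P p z)).
  assert (Hz : F (fun p => Rmin (u p) (w p) <= z p <= Rmax (u p) (w p) /\ P p (z p)))
    by (revert HP; apply filter_imp; intros p Hp; exact (epsilon_spec _ _ Hp)).
  exists z. split; [|exact (filter_imp _ _ (fun p Hp => proj2 Hp) Hz)].
  apply filterlim_locally. intro eps.
  assert (Hu' : F (fun p => ball t0 eps (u p))) by exact (Hu _ (locally_ball t0 eps)).
  assert (Hw' : F (fun p => ball t0 eps (w p))) by exact (Hw _ (locally_ball t0 eps)).
  generalize (filter_and _ _ (filter_and _ _ Hu' Hw') Hz).
  apply filter_imp. intros p [[Hup Hwp] [Hzp _]]. exact (ball_between _ _ _ _ _ Hup Hwp Hzp).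
Qed.

Lemma filterlim_Rmult {T} (F : (T -> Prop) -> Prop) {FF : Filter F} (g h : T -> R) (l m : R) :
  filterlim g F (locally l) -> filterlim h F (locally m) ->
  filterlim (fun p => g p * h p) F (locally (l * m)).
Proof. intros Hg Hh. exact (filterlim_comp_2 _ _ Rmult Hg Hh (filterlim_mult (K := R_AbsRing) l m)). Qed.

Lemma periodic_Z P (g : R -> R) : periodic P g -> forall (k : Z) x, g (x + IZR k * P) = g x.
Proof.
  intros Hg.
  assert (Hnat : forall n x, g (x + INR n * P) = g x).
  { induction n as [|n IH]; intro x.
    - rewrite Rmult_0_l, Rplus_0_r. reflexivity.
    - rewrite S_INR, <- (IH x). replace (x + (INR n + 1) * P) with (x + INR n * P + P) by ring.
      apply Hg. }
  intros [|p|p] x.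
  - rewrite Rmult_0_l, Rplus_0_r. reflexivity.
  - rewrite <- (Hnat (Pos.to_nat p) x), INR_IZR_INZ, positive_nat_Z. reflexivity.
  - rewrite <- (Hnat (Pos.to_nat p) (x + IZR (Z.neg p) * P)), INR_IZR_INZ, positive_nat_Z.
    f_equal. rewrite <- Pos2Z.opp_pos, opp_IZR. ring.
Qed.

(** * Third-order jets and the Schwarzian *)

Definition derivs3 (V : R -> Prop) (F F1 F2 F3 : R -> R) : Prop :=
  forall y, V y -> is_derive F y (F1 y) /\ is_derive F1 y (F2 y) /\ is_derive F2 y (F3 y).

Lemma derivs3_comp U V W A A1 A2 A3 B B1 B2 B3 :
  derivs3 U A A1 A2 A3 -> derivs3 V B B1 B2 B3 -> (forall y, W y -> V y /\ U (B y)) ->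
  derivs3 W (fun t => A (B t)) (fun t => A1 (B t) * B1 t)
    (fun t => A2 (B t) * B1 t ^ 2 + A1 (B t) * B2 t)
    (fun t => A3 (B t) * B1 t ^ 3 + 3 * A2 (B t) * B1 t * B2 t + A1 (B t) * B3 t).
Proof.
  intros HA HB HW y Hy. destruct (HW y Hy) as [HVy HUy].
  destruct (HB y HVy) as [dB [dB1 dB2]]. destruct (HA (B y) HUy) as [dA [dA1 dA2]].
  split; [|split]; auto_derive; repeat first [ split | eexists; eassumption ];
    rewrite ?(Derive_of_is_derive _ _ _ dB), ?(Derive_of_is_derive _ _ _ dB1),
      ?(Derive_of_is_derive _ _ _ dB2), ?(Derive_of_is_derive _ _ _ dA),
      ?(Derive_of_is_derive _ _ _ dA1), ?(Derive_of_is_derive _ _ _ dA2); ring.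
Qed.

Lemma Derive_n_derivs3 V F F1 F2 F3 t : derivs3 V F F1 F2 F3 -> locally t V ->
  Derive F t = F1 t /\ Derive_n F 2 t = F2 t /\ Derive_n F 3 t = F3 t.
Proof.
  intros HF HV.
  assert (D1 : forall y, V y -> Derive F y = F1 y) by (intros y Hy; apply is_derive_unique, HF, Hy).
  assert (D2 : forall y, locally y V -> Derive (Derive F) y = F2 y).
  { intros y Hy. rewrite (Derive_ext_loc _ F1); [|exact (filter_imp _ _ D1 Hy)].
    apply is_derive_unique, HF, locally_singleton, Hy. }
  split; [|split].
  - apply D1, locally_singleton, HV.
  - apply D2, HV.
  - change (Derive (Derive (Derive F)) t = F3 t).
    rewrite (Derive_ext_loc _ F2); [|exact (filter_imp _ _ D2 (locally_locally _ _ HV))].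
    apply is_derive_unique, HF, locally_singleton, HV.
Qed.

Definition schwarzian_jet (d1 d2 d3 : R) : R := d3 / d1 - 3 / 2 * (d2 / d1) ^ 2.

Lemma schwarzian_derivs3 V F F1 F2 F3 t : derivs3 V F F1 F2 F3 -> locally t V ->
  schwarzian F t = schwarzian_jet (F1 t) (F2 t) (F3 t).
Proof.
  intros HF HV. destruct (Derive_n_derivs3 _ _ _ _ _ _ HF HV) as [E1 [E2 E3]].
  unfold schwarzian, schwarzian_jet. rewrite E1, E2, E3. reflexivity.
Qed.

Lemma schwarzian_jet_comp A1 A2 A3 B1 B2 B3 : A1 <> 0 -> B1 <> 0 ->
  schwarzian_jet (A1 * B1) (A2 * B1 ^ 2 + A1 * B2) (A3 * B1 ^ 3 + 3 * A2 * B1 * B2 + A1 * B3) =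
  schwarzian_jet A1 A2 A3 * B1 ^ 2 + schwarzian_jet B1 B2 B3.
Proof. intros HA HB. unfold schwarzian_jet. field. split; assumption. Qed.

Lemma is_derive_schwarzian_jet_at_id (u1 u2 u3 : R -> R) (d1 d2 d3 : R) :
  is_derive u1 0 d1 -> is_derive u2 0 d2 -> is_derive u3 0 d3 ->
  u1 0 = 1 -> u2 0 = 0 -> u3 0 = 0 ->
  is_derive (fun s => schwarzian_jet (u1 s) (u2 s) (u3 s)) 0 d3.
Proof.
  intros H1 H2 H3 E1 E2 E3. unfold schwarzian_jet. auto_derive.
  - repeat first [ split | eexists; eassumption ]; rewrite E1; apply R1_neq_R0.
  - rewrite (Derive_of_is_derive _ _ _ H1), (Derive_of_is_derive _ _ _ H2),
      (Derive_of_is_derive _ _ _ H3), E1, E2, E3. field.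
Qed.

Lemma trapezoid_remainder (F F1 F2 F3 : R -> R) u w : u <> w ->
  derivs3 (fun y => Rmin u w <= y <= Rmax u w) F F1 F2 F3 ->
  exists z, Rmin u w <= z <= Rmax u w /\
    -2 * (F u - F w) + (u - w) * (F1 u + F1 w) = (u - w) ^ 3 * F3 z / 6.
Proof.
  intros Huw HF.
  assert (Huw3 : (u - w) ^ 3 <> 0) by (apply pow_nonzero; lra).
  set (K := (-2 * (F u - F w) + (u - w) * (F1 u + F1 w)) / (u - w) ^ 3).
  set (g := fun y => -2 * (F y - F w) + (y - w) * (F1 y + F1 w) - K * (y - w) ^ 3).
  set (h := fun y => F1 w - F1 y + (y - w) * F2 y - 3 * K * (y - w) ^ 2).
  assert (Hg : forall y, Rmin u w <= y <= Rmax u w -> is_derive g y (h y)).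
  { intros y Hy. destruct (HF y Hy) as [H0 [H1 _]]. unfold g, h. auto_derive.
    - repeat split; eexists; eassumption.
    - rewrite (Derive_of_is_derive _ _ _ H0), (Derive_of_is_derive _ _ _ H1). ring. }
  destruct (Rolle_open g h u w Huw Hg) as [eta [Heta Hh_eta]].
  { unfold g, K. field. lra. }
  assert (Hsub : forall y, Rmin eta w <= y <= Rmax eta w -> Rmin u w <= y <= Rmax u w).
  { unfold Rmin, Rmax in *. intros y. destruct (Rle_dec u w), (Rle_dec eta w); lra. }
  assert (Hew : eta <> w) by (unfold Rmin, Rmax in Heta; destruct (Rle_dec u w); lra).
  destruct (Rolle_open h (fun y => (y - w) * (F3 y - 6 * K)) eta w Hew) as [z [Hz Hz0]].
  - intros y Hy. destruct (HF y (Hsub y Hy)) as [_ [H1 H2]]. unfold h. auto_derive.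
    + repeat split; eexists; eassumption.
    + rewrite (Derive_of_is_derive _ _ _ H1), (Derive_of_is_derive _ _ _ H2). ring.
  - rewrite Hh_eta. unfold h. ring.
  - assert (Hzw : z - w <> 0) by (unfold Rmin, Rmax in Hz; destruct (Rle_dec eta w); lra).
    exists z. split; [apply Hsub; lra|].
    assert (HK : F3 z = 6 * K) by (apply Rmult_integral in Hz0; destruct Hz0; [contradiction | lra]).
    rewrite HK. unfold K. field. lra.
Qed.

Definition tan_chart (a y : R) : R := a * tan (y / a).
Definition atan_chart (a t : R) : R := a * atan (t / a).

Section TanChart.
Variable a : R.
Hypothesis a_neq0 : a <> 0.

Lemma locally_cos_neq0 y : cos (y / a) <> 0 -> locally y (fun z => cos (z / a) <> 0).
Proof.
  intro Hy. apply (locally_neq0 (fun z => cos (z / a))); [|exact Hy].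
  apply (ex_derive_continuous (V := R_NormedModule)). auto_derive. exact I.
Qed.

Lemma tan_chart_derivs3 : derivs3 (fun y => cos (y / a) <> 0) (tan_chart a)
  (fun y => 1 + tan (y / a) ^ 2)
  (fun y => 2 * tan (y / a) * (1 + tan (y / a) ^ 2) / a)
  (fun y => 2 * (1 + 3 * tan (y / a) ^ 2) * (1 + tan (y / a) ^ 2) / a ^ 2).
Proof.
  intros y Hy. unfold tan_chart. unfold Rdiv in *.
  split; [|split]; (auto_derive;
    [ repeat split; eexists; apply is_derive_tan, Hy
    | rewrite ?(Derive_of_is_derive _ _ _ (is_derive_tan _ Hy)); field; auto ]).
Qed.

Lemma schwarzian_jet_tan_chart y :
  schwarzian_jet (1 + tan (y / a) ^ 2) (2 * tan (y / a) * (1 + tan (y / a) ^ 2) / a)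
    (2 * (1 + 3 * tan (y / a) ^ 2) * (1 + tan (y / a) ^ 2) / a ^ 2) = 2 / a ^ 2.
Proof.
  unfold schwarzian_jet. field. split; [exact a_neq0 | apply Rgt_not_eq, one_plus_sqr_pos].
Qed.

Lemma atan_chart_derivs3 : derivs3 (fun _ => True) (atan_chart a)
  (fun t => / (1 + (t / a) ^ 2))
  (fun t => - 2 * t / (a ^ 2 * (1 + (t / a) ^ 2) ^ 2))
  (fun t => (6 * (t / a) ^ 2 - 2) / (a ^ 2 * (1 + (t / a) ^ 2) ^ 3)).
Proof.
  intros t _. unfold atan_chart.
  assert (Hm := one_plus_sqr_pos (t / a)).
  assert (Ha2 : 0 < a ^ 2) by (apply pow2_gt_0; exact a_neq0).
  split; [|split]; auto_derive; repeat split. all: try (intro H0; unfold Rdiv in *; nra).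
  all: field; repeat split; try exact a_neq0; intro H0; nra.
Qed.

Lemma schwarzian_jet_atan_chart t :
  schwarzian_jet (/ (1 + (t / a) ^ 2)) (- 2 * t / (a ^ 2 * (1 + (t / a) ^ 2) ^ 2))
    ((6 * (t / a) ^ 2 - 2) / (a ^ 2 * (1 + (t / a) ^ 2) ^ 3)) = - 2 / a ^ 2 * (/ (1 + (t / a) ^ 2)) ^ 2.
Proof.
  assert (Hm := one_plus_sqr_pos (t / a)).
  assert (Ha2 : 0 < a ^ 2) by (apply pow2_gt_0; exact a_neq0).
  unfold schwarzian_jet. field. repeat split; try exact a_neq0; intro H0; nra.
Qed.

Lemma tan_atan_chart t : tan (atan_chart a t / a) = t / a.
Proof.
  unfold atan_chart. replace (a * atan (t / a) / a) with (atan (t / a)) by (field; exact a_neq0).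
  apply tan_atan.
Qed.

Lemma cos_atan_chart_neq0 t : cos (atan_chart a t / a) <> 0.
Proof.
  unfold atan_chart. replace (a * atan (t / a) / a) with (atan (t / a)) by (field; exact a_neq0).
  destruct (atan_bound (t / a)). apply Rgt_not_eq, cos_gt_0; lra.
Qed.

Lemma atan_chart_tan_chart y : cos (y / a) <> 0 ->
  exists k : Z, atan_chart a (tan_chart a y) = y + IZR k * (a * PI).
Proof.
  intro Hy. set (u := atan_chart a (tan_chart a y) / a).
  assert (Hu : cos u <> 0) by apply cos_atan_chart_neq0.
  assert (Htan : tan u = tan (y / a)).
  { unfold u. rewrite tan_atan_chart. unfold tan_chart. field. exact a_neq0. }
  assert (Hsin : sin (u - y / a) = 0).
  { rewrite sin_minus.
    replace (sin u) with (tan u * cos u) by (unfold tan; field; exact Hu).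
    replace (sin (y / a)) with (tan (y / a) * cos (y / a)) by (unfold tan; field; exact Hy).
    rewrite Htan. ring. }
  destruct (sin_eq_0_0 _ Hsin) as [k Hk]. exists k.
  replace (atan_chart a (tan_chart a y)) with (a * u) by (unfold u; field; exact a_neq0).
  replace u with (u - y / a + y / a) by ring. rewrite Hk. field. exact a_neq0.
Qed.
End TanChart.

(** * Flows *)

Lemma pdw_app w w' g : pdw (w ++ w') g = pdw w (pdw w' g).
Proof. induction w as [|b w IH]; simpl; [reflexivity | rewrite IH; reflexivity]. Qed.

Lemma smooth2_pd2 g : smooth2 g -> smooth2 (pd2 g).
Proof. intros H w s t. generalize (H (w ++ false :: nil) s t). rewrite pdw_app. exact (fun h => h). Qed.

Lemma pd1_pd2 g : smooth2 g -> pd1 (pd2 g) = pd2 (pd1 g).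
Proof.
  intro H. apply functional_extensionality; intro s; apply functional_extensionality; intro t.
  unfold pd1, pd2. apply Schwarz.
  - exists (mkposreal 1 Rlt_0_1). intros u v _ _.
    destruct (H nil u v) as [_ [Hs Ht]].
    split; [exact Hs | split; [exact Ht | split]].
    + exact (proj1 (proj2 (H (false :: nil) u v))).
    + exact (proj2 (proj2 (H (true :: nil) u v))).
  - exact (proj1 (H (true :: false :: nil) s t)).
  - exact (proj1 (H (false :: true :: nil) s t)).
Qed.

Lemma smooth2_iter_pd2 k g : smooth2 g -> smooth2 (Nat.iter k pd2 g).
Proof. intro H. induction k as [|k IH]; [exact H | exact (smooth2_pd2 _ IH)]. Qed.

Lemma pd1_iter_pd2 k g : smooth2 g -> pd1 (Nat.iter k pd2 g) = Nat.iter k pd2 (pd1 g).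
Proof.
  intro H. induction k as [|k IH]; [reflexivity|].
  simpl. rewrite pd1_pd2 by exact (smooth2_iter_pd2 k g H). rewrite IH. reflexivity.
Qed.

Lemma iter_pd2_Derive_n k g s t : Nat.iter k pd2 g s t = Derive_n (g s) k t.
Proof.
  revert t. induction k as [|k IH]; intro t; [reflexivity|].
  simpl. unfold pd2 at 1. apply Derive_ext, IH.
Qed.

Section Flow.
Variables (f : R -> R) (phi : R -> R -> R).
Hypothesis phi_flow : is_flow f phi.

Lemma flow_is_derive_Derive_n s k t : is_derive (Derive_n (phi s) k) t (Derive_n (phi s) (S k) t).
Proof.
  apply Derive_correct.
  apply (ex_derive_ext (fun t' => Nat.iter k pd2 phi s t')); [intro; apply iter_pd2_Derive_n|].
  exact (proj2 (proj2 (smooth2_iter_pd2 k phi (proj1 phi_flow) nil s t))).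
Qed.

Lemma flow_derivs3 s :
  derivs3 (fun _ => True) (phi s) (Derive_n (phi s) 1) (Derive_n (phi s) 2) (Derive_n (phi s) 3).
Proof.
  intros y _. split; [|split]; [exact (flow_is_derive_Derive_n s 0 y)
  | exact (flow_is_derive_Derive_n s 1 y) | exact (flow_is_derive_Derive_n s 2 y)].
Qed.

(* Schwarz's theorem lets the time derivative commute with the space derivatives. *)
Lemma is_derive_flow_Derive_n k x : is_derive (fun s => Derive_n (phi s) k x) 0 (Derive_n f k x).
Proof.
  destruct phi_flow as [Hsmooth [Hinit Hflow]].
  apply (is_derive_ext (fun s => Nat.iter k pd2 phi s x)); [intro; apply iter_pd2_Derive_n|].
  replace (Derive_n f k x) with (pd1 (Nat.iter k pd2 phi) 0 x).
  - apply Derive_correct. exact (proj1 (proj2 (smooth2_iter_pd2 k phi Hsmooth nil 0 x))).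
  - rewrite (pd1_iter_pd2 k phi Hsmooth), iter_pd2_Derive_n. apply Derive_n_ext. intro t.
    unfold pd1. rewrite (Derive_of_is_derive _ _ _ (Hflow 0 t)), Hinit. reflexivity.
Qed.

Lemma continuous_flow_Derive_n k x : continuous (fun s => Derive_n (phi s) k x) 0.
Proof. apply (ex_derive_continuous (V := R_NormedModule)). eexists. apply is_derive_flow_Derive_n. Qed.

Lemma Derive_n_flow_at0 k x : Derive_n (phi 0) k x = Derive_n (fun t => t ^ 1) k x.
Proof. apply Derive_n_ext. intro t. rewrite (proj1 (proj2 phi_flow)). ring. Qed.
End Flow.

Definition scale (c : pcircle) : R := match c with circle_2pi => 2 | circle_RP1 => 1 end.

Lemma scale_neq0 c : scale c <> 0.
Proof. destruct c; simpl; lra. Qed.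

Lemma Phi_tan_chart c : Phi c = tan_chart (scale c).
Proof.
  apply functional_extensionality; intro y. unfold tan_chart.
  destruct c; simpl; [reflexivity | rewrite Rdiv_1_r; ring].
Qed.

Lemma Phi_inv_atan_chart c : Phi_inv c = atan_chart (scale c).
Proof.
  apply functional_extensionality; intro t. unfold atan_chart.
  destruct c; simpl; [reflexivity | rewrite Rdiv_1_r; ring].
Qed.

Lemma period_scale c : period c = scale c * PI.
Proof. destruct c; simpl; ring. Qed.

Lemma Phi_finite_cos c y : Phi_finite c y -> cos (y / scale c) <> 0.
Proof. destruct c; simpl; [auto | rewrite Rdiv_1_r; auto]. Qed.

Lemma lam_tan c y : cos (y / scale c) <> 0 -> lam c y = 1 + tan (y / scale c) ^ 2.
Proof.
  intro Hy. unfold lam. rewrite Phi_tan_chart.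
  apply is_derive_unique, (tan_chart_derivs3 _ (scale_neq0 c) y Hy).
Qed.

Lemma lam_pos c y : cos (y / scale c) <> 0 -> 0 < lam c y.
Proof. intro Hy. rewrite (lam_tan c y Hy). apply one_plus_sqr_pos. Qed.

Lemma is_derive_Phi c y : cos (y / scale c) <> 0 -> is_derive (Phi c) y (lam c y).
Proof.
  intro Hy. rewrite (lam_tan c y Hy), Phi_tan_chart.
  exact (proj1 (tan_chart_derivs3 _ (scale_neq0 c) y Hy)).
Qed.

Lemma ex_derive_lam c y : cos (y / scale c) <> 0 -> ex_derive (lam c) y.
Proof.
  intro Hy. eexists. apply (is_derive_ext_loc (fun x => 1 + tan (x / scale c) ^ 2)).
  - exact (filter_imp _ _ (fun x Hx => eq_sym (lam_tan c x Hx)) (locally_cos_neq0 _ y Hy)).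
  - exact (proj1 (proj2 (tan_chart_derivs3 _ (scale_neq0 c) y Hy))).
Qed.

Lemma Phi_injective_on c x b : x <> b ->
  (forall z, Rmin x b <= z <= Rmax x b -> cos (z / scale c) <> 0) -> Phi c x <> Phi c b.
Proof.
  intros Hxb Hcos Heq.
  destruct (Rolle_open (Phi c) (lam c) x b Hxb) as [z [Hz Hlam]]; [|exact Heq|].
  - intros y Hy. apply is_derive_Phi, Hcos, Hy.
  - refine (Rgt_not_eq _ _ (lam_pos c z _) Hlam). apply Hcos. lra.
Qed.

(** * The Schwarzian of a flow *)

(* Cocycle identity for [S (Phi o psi o Phi_inv)]: [Phi] has constant Schwarzian [2 / a ^ 2],
   and [Phi_inv] has Schwarzian [- 2 / a ^ 2 * Phi_inv' ^ 2]. *)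
Lemma Schw_bold_cocycle c th (psi psi1 psi2 psi3 : R -> R) :
  cos (th / scale c) <> 0 -> derivs3 (fun _ => True) psi psi1 psi2 psi3 ->
  psi1 (Phi_inv c (Phi c th)) <> 0 -> cos (psi (Phi_inv c (Phi c th)) / scale c) <> 0 ->
  Schw_bold c psi th =
    2 / scale c ^ 2 * (psi1 (Phi_inv c (Phi c th)) ^ 2 - 1)
    + schwarzian_jet (psi1 (Phi_inv c (Phi c th))) (psi2 (Phi_inv c (Phi c th)))
        (psi3 (Phi_inv c (Phi c th))).
Proof.
  intros Hth Hpsi H1 Hcos.
  unfold Schw_bold, tilde_map. rewrite (lam_tan c th Hth), Phi_tan_chart, Phi_inv_atan_chart in *.
  assert (Ha := scale_neq0 c). set (a := scale c) in *.
  set (t0 := tan_chart a th) in *.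
  assert (Hinner := derivs3_comp _ _ (fun _ => True) _ _ _ _ _ _ _ _ Hpsi (atan_chart_derivs3 a Ha)
    (fun _ _ => conj I I)).
  set (V := fun t => cos (psi (atan_chart a t) / a) <> 0).
  assert (Houter := derivs3_comp _ _ V _ _ _ _ _ _ _ _ (tan_chart_derivs3 a Ha) Hinner
    (fun y Hy => conj I Hy)).
  assert (HV : locally t0 V).
  { apply (locally_neq0 (fun t => cos (psi (atan_chart a t) / a))); [|exact Hcos].
    apply (ex_derive_continuous (V := R_NormedModule)).
    eexists. apply (is_derive_comp_mul (fun y => cos (y / a))); [|exact (proj1 (Hinner t0 I))].
    auto_derive; [exact I | reflexivity]. }
  rewrite (schwarzian_derivs3 _ _ _ _ _ _ Houter HV). cbv beta.
  assert (Hq : / (1 + (t0 / a) ^ 2) <> 0) by apply Rinv_neq_0_compat, Rgt_not_eq, one_plus_sqr_pos.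
  rewrite schwarzian_jet_comp, schwarzian_jet_comp, schwarzian_jet_tan_chart, schwarzian_jet_atan_chart
    by first [ exact Ha | exact Hq | exact H1 | apply Rgt_not_eq, one_plus_sqr_pos
             | apply Rmult_integral_contrapositive_currified; assumption ].
  replace (t0 / a) with (tan (th / a)) by (unfold t0, tan_chart; field; exact Ha).
  field. split; [exact Ha | apply Rgt_not_eq, one_plus_sqr_pos].
Qed.

(* [f''' + 2 S(Phi) f'] in the coordinate theta, with [S(Phi) = 2 / a ^ 2]. *)
Definition inf_schwarzian (a : R) (f : R -> R) (y : R) : R := Derive_n f 3 y + 4 / a ^ 2 * Derive f y.

Lemma is_derive_Schw_bold_flow c f phi th : is_flow f phi -> cos (th / scale c) <> 0 ->
  is_derive (fun s => Schw_bold c (phi s) th) 0 (inf_schwarzian (scale c) f (Phi_inv c (Phi c th))).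
Proof.
  intros Hphi Hth.
  assert (Hx1 : cos (Phi_inv c (Phi c th) / scale c) <> 0).
  { rewrite Phi_inv_atan_chart. exact (cos_atan_chart_neq0 _ (scale_neq0 c) _). }
  set (a := scale c) in *. set (x1 := Phi_inv c (Phi c th)) in *.
  set (u := fun k s => Derive_n (phi s) k x1).
  assert (hu : forall k, is_derive (u k) 0 (Derive_n f k x1))
    by (intro k; exact (is_derive_flow_Derive_n f phi Hphi k x1)).
  assert (u1_0 : u 1%nat 0 = 1).
  { unfold u. rewrite (Derive_n_flow_at0 f phi Hphi), Derive_n_pow_smalli by auto. simpl. field. }
  assert (uk_0 : forall k, (1 < k)%nat -> u k 0 = 0).
  { intros k Hk. unfold u. rewrite (Derive_n_flow_at0 f phi Hphi). apply Derive_n_pow_bigi, Hk. }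
  assert (Hu1 : locally 0 (fun s => u 1%nat s <> 0)).
  { apply locally_neq0; [apply (continuous_flow_Derive_n f phi Hphi) | rewrite u1_0; apply R1_neq_R0]. }
  assert (Hcos : locally 0 (fun s => cos (phi s x1 / a) <> 0)).
  { apply (locally_neq0 (fun s => cos (phi s x1 / a))).
    - apply (continuous_comp (fun s => phi s x1) (fun y => cos (y / a))).
      + exact (continuous_flow_Derive_n f phi Hphi 0 x1).
      + apply (ex_derive_continuous (V := R_NormedModule)). auto_derive. exact I.
    - rewrite (proj1 (proj2 Hphi)). exact Hx1. }
  apply (is_derive_ext_loc (fun s => 2 / a ^ 2 * (u 1%nat s ^ 2 - 1)
                                     + schwarzian_jet (u 1%nat s) (u 2%nat s) (u 3%nat s))).
  - apply (filter_imp (fun s => u 1%nat s <> 0 /\ cos (phi s x1 / a) <> 0));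
      [|exact (filter_and _ _ Hu1 Hcos)].
    intros s [Hs1 Hs2]. symmetry.
    exact (Schw_bold_cocycle c th _ _ _ _ Hth (flow_derivs3 f phi Hphi s) Hs1 Hs2).
  - unfold inf_schwarzian. rewrite Rplus_comm.
    apply (is_derive_plus (fun s => 2 / a ^ 2 * (u 1%nat s ^ 2 - 1))).
    + auto_derive; [eexists; exact (hu 1%nat)|].
      rewrite (Derive_of_is_derive _ _ _ (hu 1%nat)), u1_0.
      change (Derive_n f 1 x1) with (Derive f x1). field. exact (scale_neq0 c).
    + apply (is_derive_schwarzian_jet_at_id _ _ _ _ _ _ (hu 1%nat) (hu 2%nat) (hu 3%nat) u1_0);
        apply uk_0; auto.
Qed.

(** * The vector field in the affine chart *)

(* [affine_field a f] is the coefficient [F] of [xi = f d/dtheta] in the chart [t = a tan (theta / a)],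
   i.e. [F (Phi theta) = f theta * lam theta]; [affine_field1..3] are its first three derivatives. *)
Definition affine_field (a : R) (f : R -> R) (t : R) : R := f (atan_chart a t) * (1 + (t / a) ^ 2).
Definition affine_field1 (a : R) (f : R -> R) (t : R) : R :=
  Derive f (atan_chart a t) + 2 * t / a ^ 2 * f (atan_chart a t).
Definition affine_field2 (a : R) (f : R -> R) (t : R) : R :=
  (Derive_n f 2 (atan_chart a t) + 2 * t / a ^ 2 * Derive f (atan_chart a t)) / (1 + (t / a) ^ 2)
  + 2 / a ^ 2 * f (atan_chart a t).
Definition affine_field3 (a : R) (f : R -> R) (t : R) : R :=
  inf_schwarzian a f (atan_chart a t) / (1 + (t / a) ^ 2) ^ 2.

Section AffineField.
Variables (a : R) (f : R -> R).
Hypotheses (a_neq0 : a <> 0) (f_smooth : smooth f).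

Ltac smooth_side :=
  first [ exact (f_smooth 1%nat _) | exact (f_smooth 2%nat _) | exact (f_smooth 3%nat _)
        | exact (f_smooth 4%nat _) | exact I | apply Rgt_not_eq, one_plus_sqr_pos ].

Lemma affine_field_derivs3 :
  derivs3 (fun _ => True) (affine_field a f) (affine_field1 a f) (affine_field2 a f) (affine_field3 a f).
Proof.
  intros t _. unfold affine_field, affine_field1, affine_field2, affine_field3, inf_schwarzian, atan_chart.
  assert (Hm := one_plus_sqr_pos (t / a)). assert (Ha2 : 0 < a * a) by apply Rsqr_pos_lt, a_neq0.
  unfold Rdiv in *.
  split; [|split]; auto_derive; repeat split; try smooth_side; cbn [Derive_n]; Derive_eta_reduce;
    field; repeat split; try exact a_neq0; try lra; intro; nra.
Qed.

Lemma continuous_affine_field3 t : continuous (affine_field3 a f) t.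
Proof.
  apply (ex_derive_continuous (V := R_NormedModule)).
  unfold affine_field3, inf_schwarzian, atan_chart.
  assert (Hm := one_plus_sqr_pos (t / a)). unfold Rdiv in *.
  auto_derive. repeat split; try smooth_side. intro; nra.
Qed.

Lemma affine_field_tan_chart y : periodic (a * PI) f -> cos (y / a) <> 0 ->
  affine_field a f (tan_chart a y) = f y * (1 + tan (y / a) ^ 2).
Proof.
  intros Hper Hy. unfold affine_field. destruct (atan_chart_tan_chart a a_neq0 y Hy) as [k ->].
  rewrite (periodic_Z _ _ Hper). unfold tan_chart. f_equal. f_equal. f_equal. field. exact a_neq0.
Qed.
End AffineField.

Lemma inf_schwarzian_affine c f th : cos (th / scale c) <> 0 ->
  inf_schwarzian (scale c) f (Phi_inv c (Phi c th)) = affine_field3 (scale c) f (Phi c th) * lam c th ^ 2.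
Proof.
  intro Hth. unfold affine_field3. rewrite (lam_tan c th Hth), Phi_inv_atan_chart, Phi_tan_chart.
  replace (tan_chart (scale c) th / scale c) with (tan (th / scale c))
    by (unfold tan_chart; field; apply scale_neq0).
  field. apply Rgt_not_eq, one_plus_sqr_pos.
Qed.

Section PullBack.
Variables (c : pcircle) (f : R -> R).
Hypothesis f_field : vector_field c f.
Local Notation a := (scale c).

Lemma is_derive_comp_Phi (G : R -> R) y l : cos (y / a) <> 0 -> is_derive G (Phi c y) l ->
  is_derive (fun x => G (Phi c x)) y (l * lam c y).
Proof. intros Hy HG. exact (is_derive_comp_mul _ _ _ _ _ HG (is_derive_Phi c y Hy)). Qed.

Lemma f_lam_affine y : cos (y / a) <> 0 -> f y * lam c y = affine_field a f (Phi c y).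
Proof.
  intro Hy.
  assert (Hper : periodic (a * PI) f) by (rewrite <- period_scale; exact (proj2 f_field)).
  rewrite (lam_tan c y Hy), Phi_tan_chart, (affine_field_tan_chart a f (scale_neq0 c) y Hper Hy).
  reflexivity.
Qed.

Lemma Div_affine y : cos (y / a) <> 0 -> Div c f y = affine_field1 a f (Phi c y).
Proof.
  intro Hy. unfold Div.
  rewrite (Derive_is_derive_loc _ (fun x => affine_field a f (Phi c x)) y
    (affine_field1 a f (Phi c y) * lam c y)).
  - field. apply Rgt_not_eq, lam_pos, Hy.
  - exact (filter_imp _ _ (fun x Hx => eq_sym (f_lam_affine x Hx)) (locally_cos_neq0 a y Hy)).
  - exact (is_derive_comp_Phi _ _ _ Hy
      (proj1 (affine_field_derivs3 a f (scale_neq0 c) (proj1 f_field) (Phi c y) I))).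
Qed.

Lemma Derive_Div_affine y : cos (y / a) <> 0 ->
  Derive (Div c f) y = affine_field2 a f (Phi c y) * lam c y.
Proof.
  intro Hy. apply (Derive_is_derive_loc _ (fun x => affine_field1 a f (Phi c x))).
  - exact (filter_imp _ _ (fun x Hx => eq_sym (Div_affine x Hx)) (locally_cos_neq0 a y Hy)).
  - apply (is_derive_comp_Phi _ _ _ Hy).
    exact (proj1 (proj2 (affine_field_derivs3 a f (scale_neq0 c) (proj1 f_field) (Phi c y) I))).
Qed.

Lemma s_formula_affine th : cos (th / a) <> 0 ->
  s_formula c f th = affine_field3 a f (Phi c th) * lam c th ^ 2.
Proof.
  intro Hth. unfold s_formula.
  rewrite (Derive_is_derive_loc _ (fun x => affine_field2 a f (Phi c x)) th
    (affine_field3 a f (Phi c th) * lam c th)).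
  - ring.
  - apply (filter_imp (fun x => cos (x / a) <> 0)); [|exact (locally_cos_neq0 a th Hth)].
    intros x Hx. rewrite (Derive_Div_affine x Hx). field. apply Rgt_not_eq, lam_pos, Hx.
  - exact (is_derive_comp_Phi _ _ _ Hth
      (proj2 (proj2 (affine_field_derivs3 a f (scale_neq0 c) (proj1 f_field) (Phi c th) I)))).
Qed.
End PullBack.

(** * The Lie derivative of [g_1] near the diagonal *)

Lemma Lie_g1_Div c f x b : ex_derive f x -> ex_derive f b ->
  cos (x / scale c) <> 0 -> cos (b / scale c) <> 0 -> Phi c x <> Phi c b ->
  Lie_g1 c f x b = 4 * lam c x * lam c b
    * (-2 * (f x * lam c x - f b * lam c b) + (Phi c x - Phi c b) * (Div c f x + Div c f b))
    / (Phi c x - Phi c b) ^ 3.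
Proof.
  intros Hfx Hfb Hx Hb Hxb.
  assert (Hd : Phi c x - Phi c b <> 0) by lra.
  assert (Hlx := lam_pos c x Hx). assert (Hlb := lam_pos c b Hb).
  assert (Hsides : forall y, cos (y / scale c) <> 0 -> ex_derive (lam c) y /\ ex_derive (Phi c) y)
    by (intros y Hy; split; [apply ex_derive_lam, Hy | eexists; apply is_derive_Phi, Hy]).
  assert (Dx : is_derive (fun y : R => g1 c y b) x
    (4 * Derive (lam c) x * lam c b / (Phi c x - Phi c b) ^ 2
     - 8 * lam c x ^ 2 * lam c b / (Phi c x - Phi c b) ^ 3)).
  { unfold g1. auto_derive.
    - destruct (Hsides x Hx). repeat split; auto; intro; nra.
    - Derive_eta_reduce. rewrite (is_derive_unique _ _ _ (is_derive_Phi c _ Hx)). field. lra. }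
  assert (Db : is_derive (fun y : R => g1 c x y) b
    (4 * lam c x * Derive (lam c) b / (Phi c x - Phi c b) ^ 2
     + 8 * lam c x * lam c b ^ 2 / (Phi c x - Phi c b) ^ 3)).
  { unfold g1. auto_derive.
    - destruct (Hsides b Hb). repeat split; auto; intro; nra.
    - Derive_eta_reduce. rewrite (is_derive_unique _ _ _ (is_derive_Phi c _ Hb)). field. lra. }
  unfold Lie_g1, Div. rewrite (is_derive_unique _ _ _ Dx), (is_derive_unique _ _ _ Db).
  rewrite !Derive_mult by first [assumption | apply ex_derive_lam; assumption].
  unfold g1. field. split; lra.
Qed.

Lemma Lie_g1_mean_value c f x b : vector_field c f -> x <> b ->
  (forall z, Rmin x b <= z <= Rmax x b -> cos (z / scale c) <> 0) ->
  exists z, Rmin (Phi c x) (Phi c b) <= z <= Rmax (Phi c x) (Phi c b) /\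
    Lie_g1 c f x b = 2 / 3 * (lam c x * lam c b) * affine_field3 (scale c) f z.
Proof.
  intros Hf Hxb Hcos.
  assert (HPxb := Phi_injective_on c x b Hxb Hcos).
  destruct (trapezoid_remainder _ _ _ _ (Phi c x) (Phi c b) HPxb
    (fun y _ => affine_field_derivs3 _ f (scale_neq0 c) (proj1 Hf) y I)) as [z [Hz HN]].
  exists z. split; [exact Hz|].
  assert (Hcx : cos (x / scale c) <> 0) by (apply Hcos; unfold Rmin, Rmax; destruct (Rle_dec x b); lra).
  assert (Hcb : cos (b / scale c) <> 0) by (apply Hcos; unfold Rmin, Rmax; destruct (Rle_dec x b); lra).
  rewrite (Lie_g1_Div c f x b (proj1 Hf 1%nat x) (proj1 Hf 1%nat b) Hcx Hcb HPxb),
    (f_lam_affine c f Hf x Hcx), (f_lam_affine c f Hf b Hcb),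
    (Div_affine c f Hf x Hcx), (Div_affine c f Hf b Hcb), HN.
  field. lra.
Qed.

Lemma Lie_g1_diagonal_limit c f th : vector_field c f -> cos (th / scale c) <> 0 ->
  filterlim (fun p : R * R => Lie_g1 c f (fst p) (snd p))
    (within (fun p : R * R => fst p <> snd p) (locally (th, th)))
    (locally (2 / 3 * (affine_field3 (scale c) f (Phi c th) * lam c th ^ 2))).
Proof.
  intros Hf Hth. set (a := scale c) in *.
  set (FF := within (fun p : R * R => fst p <> snd p) (locally (th, th))).
  assert (Hfst : filterlim fst FF (locally th)).
  { apply filterlim_locally. intro eps. exists eps. intros p [Hp _] _. exact Hp. }
  assert (Hsnd : filterlim snd FF (locally th)).
  { apply filterlim_locally. intro eps. exists eps. intros p [_ Hp] _. exact Hp. }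
  assert (HPhi : continuous (Phi c) th).
  { apply (ex_derive_continuous (V := R_NormedModule)). eexists. apply is_derive_Phi, Hth. }
  assert (Hlam : continuous (lam c) th).
  { apply (ex_derive_continuous (V := R_NormedModule)). apply ex_derive_lam, Hth. }
  assert (Hev : FF (fun p => exists z,
      Rmin (Phi c (fst p)) (Phi c (snd p)) <= z <= Rmax (Phi c (fst p)) (Phi c (snd p))
      /\ Lie_g1 c f (fst p) (snd p) = 2 / 3 * (lam c (fst p) * lam c (snd p)) * affine_field3 a f z)).
  { destruct (locally_cos_neq0 a th Hth) as [d Hd].
    exists d. intros [x b] [Hx Hb] Hxb. apply (Lie_g1_mean_value c f x b Hf Hxb).
    intros z Hz. apply Hd, (ball_between _ _ x b); assumption. }
  destruct (filterlim_between FF _ _ _ _ (filterlim_comp _ _ _ _ _ _ _ _ Hfst HPhi)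
    (filterlim_comp _ _ _ _ _ _ _ _ Hsnd HPhi) Hev) as [z [Hz Hzev]].
  apply (filterlim_ext_loc (fun p => 2 / 3 * (lam c (fst p) * lam c (snd p)) * affine_field3 a f (z p))).
  { revert Hzev. apply filter_imp. intros p Hp. symmetry. exact Hp. }
  replace (2 / 3 * (affine_field3 a f (Phi c th) * lam c th ^ 2))
    with (2 / 3 * (lam c th * lam c th) * affine_field3 a f (Phi c th)) by ring.
  assert (Hlam2 : filterlim (fun p => lam c (fst p) * lam c (snd p)) FF (locally (lam c th * lam c th)))
    by exact (filterlim_Rmult _ _ _ _ _ (filterlim_comp _ _ _ _ _ _ _ _ Hfst Hlam)
                (filterlim_comp _ _ _ _ _ _ _ _ Hsnd Hlam)).
  exact (filterlim_Rmult _ _ _ _ _ (filterlim_Rmult _ _ _ _ _ (filterlim_const (2 / 3)) Hlam2)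
    (filterlim_comp _ _ _ _ _ _ _ _ Hz (continuous_affine_field3 a f (proj1 Hf) (Phi c th)))).
Qed.

Theorem mainTheorem12 (c : pcircle) (f : R -> R) (phi : R -> R -> R)
  (hf : vector_field c f) (hphi : is_flow f phi)
  (th : R) (hth : Phi_finite c th) :
  is_derive (fun s => Schw_bold c (phi s) th) 0 (s_formula c f th) /\
  exists v : R,
    filterlim (fun p : R * R => Lie_g1 c f (fst p) (snd p))
      (within (fun p : R * R => fst p <> snd p) (locally (th, th)))
      (locally v) /\
    s_formula c f th = 3 / 2 * v.
Proof.
  assert (Hth := Phi_finite_cos c th hth).
  rewrite (s_formula_affine c f hf th Hth). split.
  - rewrite <- (inf_schwarzian_affine c f th Hth).
    exact (is_derive_Schw_bold_flow c f phi th hphi Hth).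
  - eexists. split; [exact (Lie_g1_diagonal_limit c f th hf Hth) | field].
Qed.
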